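(* Let $G$ be a finite connected graph with graph distance $d$ and let $\delta$ be its four-points hyperbolicity constant. Then $$\delta\le\max_{u_1,u_2,u_3,u_4\in V(G)}\ \min_{i\ne j} d(u_i,u_j).$$
   Context: The four-points hyperbolicity constant of $G$ is the smallest $\delta\ge0$ such that for all vertices $a,b,c,e$: $d(a,b)+d(c,e)\le\max\{d(a,c)+d(b,e),\ d(a,e)+d(b,c)\}+2\delta$. *)

From mathcomp Require Import all_boot all_order all_algebra.
Set Implicit Arguments. Unset Strict Implicit. Unset Printing Implicit Defensive.
Import Order.TTheory GRing.Theory Num.Theory.

Definition simple_graph (T : finType) (e : rel T) : Prop :=
  symmetric e /\ irreflexive e.

Definition connected_graph (T : finType) (e : rel T) : Prop :=
  forall x y : T, connect e x y.

Fixpoint walk (T : finType) (e : rel T) (n : nat) (x y : T) : bool :=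
  if n is n'.+1 then [exists z, e x z && walk e n' z y] else x == y.

(* Graph distance: least n such that a walk of length n from x to y exists.
   In a connected graph a shortest walk has length < #|T|, so searching
   n in [0, #|T|) gives the true distance. *)
Definition gdist (T : finType) (e : rel T) (x y : T) : nat :=
  find (fun n => walk e n x y) (iota 0 #|T|).

Definition four_point (R : realFieldType) (T : finType) (e : rel T) (delta : R)
  : Prop :=
  forall a b c d : T,
    (((gdist e a b + gdist e c d)%:R : R) <=
      Num.max ((gdist e a c + gdist e b d)%:R) ((gdist e a d + gdist e b c)%:R)
      + 2 * delta)%R.

Definition is_hyp_const (R : realFieldType) (T : finType) (e : rel T) (delta : R)
  : Prop :=
  (0 <= delta /\ four_point e delta /\
  (forall delta' : R, 0 <= delta' -> four_point e delta' -> delta <= delta'))%R.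

(* min_{i != j} d(u_i, u_j) over the six unordered pairs (d is symmetric) *)
Definition min_pair (T : finType) (e : rel T) (u1 u2 u3 u4 : T) : nat :=
  minn (minn (minn (gdist e u1 u2) (gdist e u1 u3)) (minn (gdist e u1 u4) (gdist e u2 u3)))
       (minn (gdist e u2 u4) (gdist e u3 u4)).

Definition maxmin4 (T : finType) (e : rel T) : nat :=
  \max_(q : T * T * T * T) min_pair e q.1.1.1 q.1.1.2 q.1.2 q.2.

(* Let [m] be the smallest of the six distances among [a, b, c, w].  If it
   is [d a b], the triangle inequality through [a] and [b] gives
   [d c w <= d c a + m + d b w], so [d a b + d c w <= d a c + d b w + 2 m];
   each of the other five pairs is handled alike, through its two endpoints.
   The graph distance is a metric, so [maxmin4] satisfies the four-point
   condition and bounds the least such constant. *)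
From mathcomp Require Import all_boot all_order all_algebra.
From mathcomp Require Import zify.
Set Implicit Arguments. Unset Strict Implicit.
Import Order.TTheory GRing.Theory Num.Theory.

Section FourPointMetric.
Variables (T : Type) (d : T -> T -> nat).
Hypothesis d_sym : forall x y, d x y = d y x.
Hypothesis d_triangle : forall x y z, d x z <= d x y + d y z.

Lemma four_point_pair_le a b c w m :
  [|| d a b <= m, d a c <= m, d a w <= m, d b c <= m, d b w <= m | d c w <= m] ->
  d a b + d c w <= maxn (d a c + d b w) (d a w + d b c) + 2 * m.
Proof.
have := d_triangle a c b; have := d_triangle a w b; have := d_triangle c a w.
have := d_triangle c b w; have := d_triangle a b c; have := d_triangle a b w.
have := d_triangle b a c; have := d_triangle b a w; have := d_triangle c w b.
have := d_triangle c w a; have := d_triangle a c w; have := d_triangle b c w.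
rewrite ?(d_sym b a) ?(d_sym c a) ?(d_sym w a) ?(d_sym c b) ?(d_sym w b) ?(d_sym w c).
lia.
Qed.

End FourPointMetric.

Section Walks.
Variables (T : finType) (e : rel T).

Lemma walk_cat m n x y z : walk e m x y -> walk e n y z -> walk e (m + n) x z.
Proof.
elim: m x => [|m IH] x /=; first by move/eqP->.
case/existsP=> w /andP[exw hw] hyz; apply/existsP; exists w.
by rewrite exw (IH _ hw hyz).
Qed.

Lemma walk_path x p : path e x p -> walk e (size p) x (last x p).
Proof.
elim: p x => [|w p IH] x //= /andP[exw hp].
by apply/existsP; exists w; rewrite exw IH.
Qed.

Lemma connect_walk x y : connect e x y -> exists2 n, n < #|T| & walk e n x y.
Proof.
case/connectP=> p hp ->; case: (shortenP hp) => p' hp' uniq_p' _.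
exists (size p'); last exact: walk_path.
by have := max_card (mem (x :: p')); rewrite (card_uniqP uniq_p').
Qed.

Lemma gdist_le_walk n x y : n < #|T| -> walk e n x y -> gdist e x y <= n.
Proof.
move=> n_lt hw; rewrite /gdist; case: leqP => // lt_n_find.
by have := before_find 0 lt_n_find; rewrite nth_iota ?size_iota // add0n hw.
Qed.

Lemma gdist_walk x y : connect e x y ->
  gdist e x y < #|T| /\ walk e (gdist e x y) x y.
Proof.
case/connect_walk=> n n_lt hw.
have has_walk : has (fun n => walk e n x y) (iota 0 #|T|).
  by apply/hasP; exists n; rewrite ?mem_iota.
have lt_find : gdist e x y < #|T| by rewrite -(size_iota 0 #|T|) -has_find.
by split => //; have := nth_find 0 has_walk; rewrite nth_iota // add0n.
Qed.

Hypothesis e_simple : simple_graph e.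
Hypothesis e_connected : connected_graph e.

Lemma walk_sym n x y : walk e n x y -> walk e n y x.
Proof.
elim: n x y => [|n IH] x y /=; first by rewrite eq_sym.
case/existsP=> w /andP[exw hw].
have wx : walk e 1 w x.
  by apply/existsP; exists x; rewrite /= eqxx andbT (proj1 e_simple).
by have := walk_cat (IH _ _ hw) wx; rewrite addn1.
Qed.

Lemma gdist_sym x y : gdist e x y = gdist e y x.
Proof.
have le_sym a b : gdist e b a <= gdist e a b.
  by case: (gdist_walk (e_connected a b)) => lt_ab w_ab; apply: gdist_le_walk lt_ab (walk_sym w_ab).
by apply/eqP; rewrite eqn_leq !le_sym.
Qed.

Lemma gdist_triangle x y z : gdist e x z <= gdist e x y + gdist e y z.
Proof.
case: (gdist_walk (e_connected x y)) => _ w_xy.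
case: (gdist_walk (e_connected y z)) => _ w_yz.
case: (gdist_walk (e_connected x z)) => lt_xz _.
case: (ltnP (gdist e x y + gdist e y z) #|T|) => [lt_sum|ge_sum].
  exact: gdist_le_walk lt_sum (walk_cat w_xy w_yz).
exact: leq_trans (ltnW lt_xz) ge_sum.
Qed.

Lemma min_pair_le_maxmin4 a b c w : min_pair e a b c w <= maxmin4 e.
Proof.
exact: (@leq_bigmax _ (fun q : T * T * T * T => min_pair e q.1.1.1 q.1.1.2 q.1.2 q.2)
  (a, b, c, w)).
Qed.

Lemma four_point_maxmin4 (R : realFieldType) : four_point e ((maxmin4 e)%:R : R).
Proof.
move=> a b c w.
have := min_pair_le_maxmin4 a b c w; rewrite /min_pair !geq_min -!orbA.
move/(four_point_pair_le gdist_sym gdist_triangle); rewrite -(ler_nat R) => /le_trans.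
by apply; rewrite natrD natrM -maxEnat natr_max !natrD.
Qed.

End Walks.

Local Open Scope ring_scope.

Theorem mainTheorem6 (R : realFieldType) (T : finType) (e : rel T)
  (hs : simple_graph e) (hc : connected_graph e) (delta : R)
  (hd : is_hyp_const e delta) :
  delta <= (maxmin4 e)%:R.
Proof.
case: hd => _ [_ delta_least]; apply: delta_least; first exact: ler0n.
exact: four_point_maxmin4.
Qed.
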